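(* Let $\Gamma$ be an oriented hypergraph with $A\neq\mathbf 0$ and strong coloring number $\chi=\chi(\Gamma)$, and suppose $\chi=\dfrac{\lambda_N-\lambda_1}{1-\lambda_1}$. Let $g$ be any eigenfunction of $L$ with eigenvalue $\lambda_N$, and let $V_1,\dots,V_\chi$ be the color classes of any proper strong $\chi$-coloring. Then: (1) $\operatorname{supp}(g)\cap V_i\neq\varnothing$ for all $1\le i\le\chi$; (2) $S^g_{ij}<0$ for all $1\le i<j\le\chi$; (3) for all $1\le i<j\le\chi$, $\mathrm{RQ}(g_{ij})=\lambda_1=\dfrac{\chi-\lambda_N}{\chi-1}$, and $g_{ij}$ is an eigenfunction of $L$ with eigenvalue $\lambda_1$. Consequently the multiplicity $m_\Gamma(\lambda_1)$ of $\lambda_1=(\chi-\lambda_N)/(\chi-1)$ is at least $\chi-1$, and this inequality is strict if $m_\Gamma(\lambda_N)>1$.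
   Context: An oriented hypergraph $\Gamma=(V,E,\varphi)$ consists of a finite vertex set $V$ with $|V|=N$, an edge set $E\subseteq\mathcal P(V)$, and a function $\varphi\colon V\times E\to\{-1,0,1\}$ with $\varphi(v,e)\neq 0$ iff $v\in e$. Two vertices $v,w\in e$ are co-oriented in $e$ if $\varphi(v,e)=\varphi(w,e)$ and anti-oriented in $e$ if $\varphi(v,e)=-\varphi(w,e)$. The degree is $\deg v=|\{e\in E: v\in e\}|$; we assume every vertex has degree at least $1$, and $D=\mathrm{diag}(\deg v)_{v\in V}$. The adjacency matrix $A$ is the $N\times N$ matrix with $A_{v,v}=0$ and, for $v\neq w$, $A_{v,w}=(\#\text{edges in which } v,w \text{ are anti-oriented})-(\#\text{edges in which } v,w \text{ are co-oriented})$. The normalized Laplacian is $L=\mathrm{Id}-D^{-1}A$; it is self-adjoint for $\langle f,g\rangle=\sum_{v}\deg v\, f(v)g(v)$ on functions $V\to\mathbb R$, with (real) eigenvalues $\lambda_1\le\dots\le\lambda_N$; $m_\Gamma(\lambda)$ denotes the multiplicity of $\lambda$. The Rayleigh quotient of $f\neq0$ is $\mathrm{RQ}(f)=\langle Lf,f\rangle/\langle f,f\rangle$. A proper strong $k$-coloring is a map $V\to\{1,\dots,k\}$ such that any two distinct vertices in a common edge receive different colors; $\chi(\Gamma)$ is the least such $k$. For a function $g\colon V\to\mathbb R$ and color classes $V_1,\dots,V_\chi$, define $S^g_{ij}=\sum_{v\in V_i,\,w\in V_j}A_{v,w}g(v)g(w)$, and define $g_{ij}\colon V\to\mathbb R$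 by $g_{ij}(v)=g(v)$ if $v\in V_i$, $g_{ij}(v)=-g(v)$ if $v\in V_j$, and $g_{ij}(v)=0$ otherwise. *)

From HB Require Import structures.
From mathcomp Require Import all_boot all_order all_algebra.
From mathcomp Require Import reals.
Set Implicit Arguments. Unset Strict Implicit. Unset Printing Implicit Defensive.
Import Order.TTheory GRing.Theory Num.Theory.
Local Open Scope ring_scope.

Definition is_oriented_hypergraph (N : nat) (E : {set {set 'I_N}})
  (phi : 'I_N -> {set 'I_N} -> int) : Prop :=
  forall v e, e \in E ->
    (phi v e \in [:: (-1)%R; 0%R; 1%R]) /\ ((phi v e != 0) = (v \in e)).

Definition hdeg (N : nat) (E : {set {set 'I_N}}) (v : 'I_N) : nat :=
  #|[set e in E | v \in e]|.

Definition adj (R : realType) (N : nat) (E : {set {set 'I_N}})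
  (phi : 'I_N -> {set 'I_N} -> int) (v w : 'I_N) : R :=
  if v == w then 0 else
    (#|[set e in E | [&& v \in e, w \in e & phi v e == - phi w e]]|%:R
     - #|[set e in E | [&& v \in e, w \in e & phi v e == phi w e]]|%:R).

Definition adjmx (R : realType) (N : nat) (E : {set {set 'I_N}}) (phi : 'I_N -> {set 'I_N} -> int) : 'M[R]_N :=
  \matrix_(v, w) adj R E phi v w.

Definition lapmx (R : realType) (N : nat) (E : {set {set 'I_N}}) (phi : 'I_N -> {set 'I_N} -> int) : 'M[R]_N :=
  \matrix_(v, w) ((v == w)%:R - ((hdeg E v)%:R)^-1 * adj R E phi v w).

Definition lap_apply (R : realType) (N : nat) (E : {set {set 'I_N}}) (phi : 'I_N -> {set 'I_N} -> int) (f : 'I_N -> R) (v : 'I_N) : R :=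
  \sum_w lapmx R E phi v w * f w.

Definition is_eigenfunction (R : realType) (N : nat) (E : {set {set 'I_N}}) (phi : 'I_N -> {set 'I_N} -> int) (f : 'I_N -> R) (l : R) : Prop :=
  (exists v, f v != 0) /\ forall v, lap_apply E phi f v = l * f v.

Definition wdot (R : realType) N (E : {set {set 'I_N}}) (f g : 'I_N -> R) : R :=
  \sum_v (hdeg E v)%:R * f v * g v.

Definition RQ (R : realType) (N : nat) (E : {set {set 'I_N}}) (phi : 'I_N -> {set 'I_N} -> int) (f : 'I_N -> R) : R :=
  wdot E (lap_apply E phi f) f / wdot E f f.

Definition is_min_eigenvalue (R : realType) (N : nat) (E : {set {set 'I_N}}) (phi : 'I_N -> {set 'I_N} -> int) (l : R) : Prop :=
  eigenvalue (lapmx R E phi) l /\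
  forall m, eigenvalue (lapmx R E phi) m -> l <= m.
Definition is_max_eigenvalue (R : realType) (N : nat) (E : {set {set 'I_N}}) (phi : 'I_N -> {set 'I_N} -> int) (l : R) : Prop :=
  eigenvalue (lapmx R E phi) l /\
  forall m, eigenvalue (lapmx R E phi) m -> m <= l.

Definition mult (R : realType) (N : nat) (E : {set {set 'I_N}}) (phi : 'I_N -> {set 'I_N} -> int) (l : R) : nat :=
  mup l (char_poly (lapmx R E phi)).

Definition proper_strong_coloring N (E : {set {set 'I_N}}) k (c : 'I_N -> 'I_k) : Prop :=
  forall e, e \in E -> forall v w, v \in e -> w \in e -> v != w -> c v != c w.

Definition is_strong_chromatic_number N (E : {set {set 'I_N}}) (k : nat) : Prop :=
  (exists c : 'I_N -> 'I_k, proper_strong_coloring E c) /\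
  forall k', (exists c : 'I_N -> 'I_k', proper_strong_coloring E c) -> (k <= k')%N.

Definition Sg (R : realType) (N : nat) (E : {set {set 'I_N}}) (phi : 'I_N -> {set 'I_N} -> int) k (c : 'I_N -> 'I_k) (g : 'I_N -> R) (i j : 'I_k) : R :=
  \sum_(v | c v == i) \sum_(w | c w == j) adj R E phi v w * g v * g w.

Definition gij (R : realType) N k (c : 'I_N -> 'I_k) (g : 'I_N -> R) (i j : 'I_k) : 'I_N -> R :=
  fun v => if c v == i then g v else if c v == j then - g v else 0.

(* With Q := D - A one has D L = Q, so L is self-adjoint for the degree-weighted inner
   product and l1 is the minimum of the generalized Rayleigh quotient u Q u^T / u D u^T.
   Let g be an eigenfunction for lN and g_i its restriction to the colour class V_i.  Since A
   vanishes inside each class, the nonnegative numbers q(g_i - g_j), q := Q - l1 D, sum over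
   all pairs (i, j) to 2 chi (1 - l1) |g|^2 - 2 (lN - l1) |g|^2, which is 0 by the hypothesis
   on chi.  So every g_ij = g_i - g_j attains the minimum, hence is an l1-eigenfunction; the
   same identity forces g_i <> 0 and S^g_ij < 0.  The chi - 1 functions g_1j are linearly
   independent, and when lN is not simple (it is semisimple, L being self-adjoint) a second
   lN-eigenfunction vanishing at a vertex of V_1 where g does not yields one more. *)

From HB Require Import structures.
From mathcomp Require Import all_boot all_order all_algebra.
From mathcomp Require Import reals classical_sets.
From mathcomp Require Import ring lra zify.
Import Order.TTheory GRing.Theory Num.Theory.
Local Open Scope ring_scope.
Set Implicit Arguments. Unset Strict Implicit. Unset Printing Implicit Defensive.

Section CharPoly.
Variable F : fieldType.

Lemma char_poly_trmx n (A : 'M[F]_n) : char_poly A^T = char_poly A.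
Proof.
by rewrite /char_poly -det_tr /char_poly_mx linearB /= tr_scalar_mx map_trmx trmxK.
Qed.

Lemma eigenvalue_trmx n (A : 'M[F]_n) a : eigenvalue A^T a = eigenvalue A a.
Proof. by rewrite !eigenvalue_root_char char_poly_trmx. Qed.

Lemma char_poly_conj m n (P : 'M[F]_(m, n)) (P' : 'M[F]_(n, m)) (A : 'M[F]_n) :
  m = n -> P *m P' = 1%:M -> P' *m P = 1%:M ->
  char_poly (P *m A *m P') = char_poly A.
Proof.
move=> emn; subst m => hPP' hP'P; rewrite /char_poly.
have -> : char_poly_mx (P *m A *m P') =
    map_mx polyC P *m char_poly_mx A *m map_mx polyC P'.
  rewrite /char_poly_mx mulmxBr mulmxBl !map_mxM; congr (_ - _).
  by rewrite scalar_mxC -mulmxA -map_mxM hPP' map_mx1 mulmx1.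
by rewrite !det_mulmx mulrC mulrA -det_mulmx -map_mxM hP'P map_mx1 det1 mul1r.
Qed.

Lemma char_poly_row0_scalar m (Q : 'M[F]_m.+1) (a : F) :
  (forall j, Q 0 j = a * (0 == j)%:R) ->
  char_poly Q = ('X - a%:P) * char_poly (row' 0 (col' 0 Q)).
Proof.
move=> hQ; rewrite /char_poly (expand_det_row _ 0) big_ord_recl /=.
rewrite big1 ?addr0 => [|j _]; last by rewrite !mxE hQ /= mulr0 subr0 mul0r.
rewrite !mxE hQ eqxx mulr1 /cofactor /= expr0 mul1r.
by rewrite row'_col'_char_poly_mx.
Qed.

Lemma char_poly_dvd_scalar_rows (a : F) k m (Q : 'M[F]_m) : (k <= m)%N ->
  (forall i : 'I_m, (i < k)%N -> forall j, Q i j = a * (i == j)%:R) ->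
  ('X - a%:P) ^+ k %| char_poly Q.
Proof.
elim: k m Q => [|k IH] [|m] Q // hk hQ; rewrite ?expr0 ?dvd1p //.
rewrite (@char_poly_row0_scalar _ _ a); last exact: hQ.
rewrite exprS dvdp_mul2l ?polyXsubC_eq0 //.
by apply: IH => // i hi j; rewrite !mxE hQ //= (inj_eq lift_inj).
Qed.

Lemma row_free_completion k n (W : 'M[F]_(k, n)) : row_free W ->
  exists r (P : 'M[F]_(k + r, n)) (P' : 'M[F]_(n, k + r)),
    [/\ (k + r = n)%N, P *m P' = 1%:M, P' *m P = 1%:M & usubmx P = W].
Proof.
move=> freeW; have rkW : \rank W = k by apply/eqP.
have kn : (k <= n)%N by rewrite -rkW rank_leq_col.
pose P := col_mx W (row_base (W^C)%MS).
have rkP : \rank P = n.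
  rewrite /P -addsmxE (adds_eqmx (eqmx_refl W) (eq_row_base (W^C)%MS)).
  exact/eqP/addsmx_compl_full.
have ekr : (k + \rank (W^C)%MS = n)%N by rewrite mxrank_compl rkW subnKC.
exists (\rank (W^C)%MS), P, (pinvmx P); split => //.
- by apply: mulmxVp; rewrite /row_free rkP ekr.
- by apply: mulVpmx; rewrite /row_full rkP.
- by rewrite col_mxKu.
Qed.

Lemma row_conj_eigenrow k r n (P : 'M[F]_(k + r, n)) (P' : 'M[F]_(n, k + r))
    (A : 'M[F]_n) (a : F) i :
  P *m P' = 1%:M -> row i (usubmx P) *m A = a *: row i (usubmx P) ->
  row (lshift r i) (P *m A *m P') = a *: row (lshift r i) 1%:M.
Proof.
move=> hPP' hA; rewrite !row_mul -row_usubmx hA -scalemxAl row_usubmx -row_mul hPP'.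
by rewrite !rowE scalemxAr.
Qed.

Lemma mup_char_poly_ge_eigenrows k n (W : 'M[F]_(k, n)) (A : 'M[F]_n) (a : F) :
  row_free W -> W *m A = a *: W -> (k <= mup a (char_poly A))%N.
Proof.
move=> freeW hWA; have [r [P [P' [ekr hPP' hP'P hW]]]] := row_free_completion freeW.
rewrite mup_geq ?monic_neq0 ?char_poly_monic // -(char_poly_conj A ekr hPP' hP'P).
apply: char_poly_dvd_scalar_rows (leq_addr _ _) _ => i hi j.
have -> : i = lshift r (Ordinal hi) by apply: val_inj.
have hrow : row (Ordinal hi) (usubmx P) *m A = a *: row (Ordinal hi) (usubmx P).
  by rewrite hW -row_mul hWA !rowE scalemxAr.
by move/rowP: (row_conj_eigenrow hPP' hrow) => /(_ j); rewrite !mxE.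
Qed.

(* In a basis starting with e the matrix is block lower triangular with corner a, so a is
   still an eigenvalue of the complementary block; lift one of its eigenvectors. *)
Lemma generalized_eigenvector n (A : 'M[F]_n) (a : F) (e : 'rV_n) :
  e != 0 -> e *m A = a *: e -> (1 < mup a (char_poly A))%N ->
  exists x : 'rV_n, exists c : F,
    x *m A = a *: x + c *: e /\ forall t : F, x != t *: e.
Proof.
move=> e0 heA hmup.
have freee : row_free e by rewrite /row_free rank_rV e0.
have [r [P [P' [ekr hPP' hP'P hPe]]]] := row_free_completion freee.
pose Q : 'M[F]_(1 + r) := P *m A *m P'.
have hQ : forall j, Q 0 j = a * (0 == j)%:R.
  have hrow : row 0 (usubmx P) *m A = a *: row 0 (usubmx P).
    by rewrite hPe -row_mul heA !rowE scalemxAr.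
  move=> j; move/rowP: (row_conj_eigenrow hPP' hrow) => /(_ j).
  have -> : (0 : 'I_(1 + r)) = lshift r 0 by apply: val_inj.
  by rewrite !mxE.
have hdrQ : drsubmx Q = row' 0 (col' 0 Q).
  move: (Q) => M; apply/matrixP => i j; rewrite !mxE.
  by congr (M _ _); apply: val_inj.
move: hmup; rewrite mup_geq ?monic_neq0 ?char_poly_monic //.
rewrite -(char_poly_conj A ekr hPP' hP'P) -/Q (char_poly_row0_scalar hQ) expr2.
rewrite dvdp_mul2l ?polyXsubC_eq0 // dvdp_XsubCl -eigenvalue_root_char -hdrQ.
case/eigenvalueP => u hu u0.
pose w : 'rV_(1 + r) := row_mx 0 u.
have hwQ : w *m Q = a *: w + row_mx (u *m dlsubmx Q) 0.
  rewrite /w -[Q in LHS]submxK mul_row_block !mul0mx !add0r hu.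
  by rewrite scale_row_mx add_row_mx scaler0 add0r addr0.
have he : e = row_mx 1%:M 0 *m P.
  by rewrite -[P in RHS]vsubmxK mul_row_col mul0mx addr0 mul1mx hPe.
exists (w *m P), ((u *m dlsubmx Q) 0 0); split.
  have -> : w *m P *m A = w *m Q *m P by rewrite /Q -!mulmxA hP'P mulmx1.
  rewrite hwQ mulmxDl -scalemxAl he; congr (_ + _).
  by rewrite scalemxAl scale_row_mx scaler0 scalemx1 -mx11_scalar.
move=> t; apply/eqP => hx.
have : w = row_mx t%:M 0.
  have := congr1 (mulmx^~ P') hx.
  rewrite -mulmxA hPP' mulmx1 he -scalemxAl -mulmxA hPP' mulmx1.
  by rewrite scale_row_mx scaler0 scalemx1.
by case/eq_row_mx => _ hu0; move: u0; rewrite hu0 eqxx.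
Qed.

End CharPoly.

Section BilinearForms.
Variables (R : realFieldType) (n : nat).
Implicit Types (M S T : 'M[R]_n) (u v w : 'rV[R]_n).

Definition mxform M u v : R := (u *m M *m v^T) 0 0.

Definition mxpsd M := forall u, 0 <= mxform M u u.

Definition mxposdef M := forall u, u != 0 -> 0 < mxform M u u.

Lemma mxformE M u v : mxform M u v = \sum_i \sum_j u 0 i * M i j * v 0 j.
Proof.
rewrite /mxform mxE exchange_big; apply: eq_bigr => j _.
by rewrite mxE mulr_suml; apply: eq_bigr => i _; rewrite !mxE.
Qed.

Lemma mxformDl M u v w : mxform M (u + v) w = mxform M u w + mxform M v w.
Proof. by rewrite /mxform !mulmxDl !mxE. Qed.

Lemma mxformDr M u v w : mxform M u (v + w) = mxform M u v + mxform M u w.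
Proof. by rewrite /mxform linearD /= mulmxDr !mxE. Qed.

Lemma mxformZl M a u v : mxform M (a *: u) v = a * mxform M u v.
Proof. by rewrite /mxform -!scalemxAl !mxE. Qed.

Lemma mxformZr M a u v : mxform M u (a *: v) = a * mxform M u v.
Proof. by rewrite /mxform linearZ /= -scalemxAr !mxE. Qed.

Lemma mxformNl M u v : mxform M (- u) v = - mxform M u v.
Proof. by rewrite -scaleN1r mxformZl mulN1r. Qed.

Lemma mxformNr M u v : mxform M u (- v) = - mxform M u v.
Proof. by rewrite -scaleN1r mxformZr mulN1r. Qed.

Lemma mxform0l M v : mxform M 0 v = 0.
Proof. by rewrite /mxform !mul0mx !mxE. Qed.

Lemma mxformMB M1 M2 u v : mxform (M1 - M2) u v = mxform M1 u v - mxform M2 u v.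
Proof. by rewrite /mxform mulmxBr mulmxBl !mxE. Qed.

Lemma mxformMZ a M u v : mxform (a *: M) u v = a * mxform M u v.
Proof. by rewrite /mxform -scalemxAr -scalemxAl !mxE. Qed.

Lemma mxform_suml (I : finType) M (x : I -> 'rV_n) v :
  mxform M (\sum_i x i) v = \sum_i mxform M (x i) v.
Proof. by rewrite /mxform !mulmx_suml summxE. Qed.

Lemma mxform_sumr (I : finType) M u (x : I -> 'rV_n) :
  mxform M u (\sum_i x i) = \sum_i mxform M u (x i).
Proof. by rewrite /mxform linear_sum /= mulmx_sumr summxE. Qed.

Lemma mxform_sym M u v : M^T = M -> mxform M u v = mxform M v u.
Proof.
move=> hM; rewrite /mxform.
have -> : (u *m M *m v^T) 0 0 = (u *m M *m v^T)^T 0 0 by rewrite [RHS]mxE.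
by rewrite !trmx_mul trmxK hM mulmxA.
Qed.

Lemma mxform_delta M u j : mxform M u (delta_mx 0 j) = (u *m M) 0 j.
Proof. by rewrite /mxform trmx_delta -colE mxE. Qed.

Lemma mxform_delta2 M i j : mxform M (delta_mx 0 i) (delta_mx 0 j) = M i j.
Proof. by rewrite mxform_delta -rowE !mxE. Qed.

Lemma mxform_sub_sub M u v : M^T = M ->
  mxform M (u - v) (u - v) = mxform M u u + mxform M v v - 2 * mxform M u v.
Proof.
move=> hM; rewrite !(mxformDl, mxformDr, mxformNl, mxformNr) (mxform_sym v u hM).
by ring.
Qed.

Lemma mxform_CauchySchwarz T u v : T^T = T -> mxpsd T ->
  mxform T u v ^+ 2 <= mxform T u u * mxform T v v.
Proof.
move=> hT psdT; set a := mxform T u u; set b := mxform T u v; set c := mxform T v v.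
have hquad t : 0 <= a - 2 * b * t + c * t ^+ 2.
  have := psdT (u - t *: v); rewrite mxform_sub_sub // !(mxformZl, mxformZr).
  by rewrite -/a -/b -/c; nra.
have c0 : 0 <= c by exact: psdT.
have [c00|cn0] := eqVneq c 0.
  rewrite c00 mulr0; have [->|bn0] := eqVneq b 0; first by rewrite expr0n.
  have := hquad ((a + 1) / (2 * b)); rewrite c00 mul0r addr0.
  have -> : 2 * b * ((a + 1) / (2 * b)) = a + 1 by field.
  lra.
have cpos : 0 < c by rewrite lt_def cn0.
have := hquad (b / c).
have -> : a - 2 * b * (b / c) + c * (b / c) ^+ 2 = (a * c - b ^+ 2) / c by field.
by rewrite pmulr_lge0 ?invr_gt0 // subr_ge0.
Qed.

Lemma mxpsd_kernel T u : T^T = T -> mxpsd T -> mxform T u u = 0 -> u *m T = 0.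
Proof.
move=> hT psdT Tu0; apply/rowP => j; rewrite -mxform_delta [RHS]mxE.
apply/eqP; rewrite -sqrf_eq0 eq_le sqr_ge0 andbT.
by have := mxform_CauchySchwarz u (delta_mx 0 j) hT psdT; rewrite Tu0 mul0r.
Qed.

Lemma mxposdef_unitmx S : mxposdef S -> S \in unitmx.
Proof.
move=> pdS; rewrite unitmxE unitfE; apply/negP => /det0P [u u0 uS0].
by have := pdS u u0; rewrite /mxform uS0 mul0mx mxE ltxx.
Qed.

Lemma mxform1_ge0 u : 0 <= mxform 1%:M u u.
Proof. by rewrite /mxform mulmx1 mxE sumr_ge0 // => i _; rewrite mxE -expr2 sqr_ge0. Qed.

Lemma mxform_le_norm M : exists2 K, 0 <= K &
  forall u, `|mxform M u u| <= K * mxform 1%:M u u.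
Proof.
exists (\sum_i \sum_j `|M i j|) => [|u]; first by do 2![apply: sumr_ge0 => ? _].
set s := mxform 1%:M u u.
have coord_le i : `|u 0 i| ^+ 2 <= s.
  rewrite /s /mxform mulmx1 mxE (bigD1 i) //= real_normK ?num_real //.
  by rewrite mxE -expr2 lerDl sumr_ge0 // => j _; rewrite mxE -expr2 sqr_ge0.
rewrite mxformE mulr_suml; apply: le_trans (ler_norm_sum _ _ _) _.
apply: ler_sum => i _; rewrite mulr_suml; apply: le_trans (ler_norm_sum _ _ _) _.
apply: ler_sum => j _; rewrite mulrAC normrM normrM mulrC ler_wpM2l //.
have := coord_le i; have := coord_le j; have := sqr_ge0 (`|u 0 i| - `|u 0 j|).
nra.
Qed.

(* Cauchy-Schwarz against y := u T^-1 gives |u|^4 <= (u T u^T) (u T^-T u^T). *)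
Lemma mxpsd_unitmx_coercive T : T^T = T -> mxpsd T -> T \in unitmx ->
  exists2 e, 0 < e & forall u, e * mxform 1%:M u u <= mxform T u u.
Proof.
move=> hT psdT unitT; have [K K0 hK] := mxform_le_norm (invmx T)^T.
exists (K + 1)^-1 => [|u]; first by rewrite invr_gt0 ltr_wpDl.
set s := mxform 1%:M u u; pose y := u *m invmx T.
have Tyu : mxform T y u = s by rewrite /mxform /y -(mulmxA u) mulVmx // mulmx1.
have Tyy : mxform T y y = mxform (invmx T)^T u u.
  by rewrite /mxform /y -(mulmxA u) mulVmx // mulmx1 trmx_mul !mulmxA.
have s0 : 0 <= s := mxform1_ge0 u.
have q0 := psdT u; have := mxform_CauchySchwarz y u hT psdT.
rewrite Tyu Tyy; have := ler_norm (mxform (invmx T)^T u u); have := hK u.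
move: (mxform T u u) (mxform (invmx T)^T u u) q0 => q r q0 hr1 hr2 hCS.
have sKq : s <= K * q.
  have [->|sn0] := eqVneq s 0; first by rewrite mulr_ge0.
  have spos : 0 < s by rewrite lt_def sn0.
  have qrK : q * r <= q * (K * s) by rewrite ler_wpM2l // (le_trans hr2 hr1).
  by rewrite -(ler_pM2r spos); nra.
rewrite -(ler_pM2l (ltr_wpDl K0 ltr01)) mulrA mulfV ?mul1r ?lt0r_neq0 ?ltr_wpDl //.
nra.
Qed.

Lemma mxform_sum_sub (I : finType) T (x : I -> 'rV_n) : T^T = T ->
  \sum_i \sum_j mxform T (x i - x j) (x i - x j) =
  (\sum_i mxform T (x i) (x i)) *+ (2 * #|I|)
  - mxform T (\sum_i x i) (\sum_i x i) *+ 2.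
Proof.
move=> hT.
have -> : mxform T (\sum_i x i) (\sum_i x i) = \sum_i \sum_j mxform T (x i) (x j).
  by rewrite mxform_suml; apply: eq_bigr => i _; rewrite mxform_sumr.
under eq_bigr => i _ do under eq_bigr => j _ do rewrite mxform_sub_sub //.
under eq_bigr => i _ do rewrite sumrB big_split /= sumr_const -mulr_sumr.
rewrite sumrB big_split /= sumr_const -mulr_sumr sumrMnl.
by rewrite (_ : #|xpredT| = #|I|) // mulnC mulrnA mulr_natl !mulr2n.
Qed.

Lemma sym_hollow_mxform_gt0 M : M^T = M -> (forall i, M i i = 0) -> M != 0 ->
  exists u, 0 < mxform M u u.
Proof.
move=> hM hdiag /matrix0Pn [i [j Mij]].
exists (delta_mx 0 i + M i j *: delta_mx 0 j).
rewrite !(mxformDl, mxformDr, mxformZl, mxformZr) !mxform_delta2 !hdiag.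
have -> : M j i = M i j by rewrite -[in LHS]hM mxE.
have : 0 < M i j * M i j by rewrite -expr2 exprn_even_gt0.
nra.
Qed.

Lemma mup_gt1_eigenvector (A S : 'M[R]_n) (a : R) (e : 'rV_n) :
  S^T = S -> (A *m S)^T = A *m S -> mxposdef S -> e != 0 -> e *m A = a *: e ->
  (1 < mup a (char_poly A))%N -> exists x, x *m A = a *: x /\ forall t, x != t *: e.
Proof.
move=> hS hAS pdS e0 heA hmup.
have [x [c [hx hxe]]] := generalized_eigenvector e0 heA hmup.
suff c0 : c = 0 by exists x; split => //; rewrite hx c0 scale0r addr0.
have : mxform S (x *m A) e = a * mxform S x e.
  rewrite /mxform -(mulmxA x) -hAS trmx_mul hS !mulmxA.
  rewrite -[x *m S *m A^T *m e^T]mulmxA -trmx_mul heA.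
  by rewrite linearZ /= -scalemxAr mxE.
rewrite hx mxformDl !mxformZl => /eqP; rewrite -subr_eq0 addrAC subrr add0r.
by rewrite mulf_eq0 (gt_eqF (pdS e e0)) orbF => /eqP.
Qed.

End BilinearForms.

Section Rayleigh.
Variables (R : realType) (n : nat).
Implicit Types (Q D : 'M[R]_n) (u : 'rV[R]_n).

Lemma mxposdef_psd D : mxposdef D -> mxpsd D.
Proof.
move=> pdD u; have [->|u0] := eqVneq u 0; first by rewrite mxform0l.
exact/ltW/pdD.
Qed.

Lemma mxform_ratio_lbound Q D : D^T = D -> mxposdef D ->
  exists b, forall u, u != 0 -> b <= mxform Q u u / mxform D u u.
Proof.
move=> hD pdD; have [KQ KQ0 hKQ] := mxform_le_norm Q.
have [eD eD0 heD] := mxpsd_unitmx_coercive hD (mxposdef_psd pdD) (mxposdef_unitmx pdD).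
exists (- (KQ / eD)) => u u0; rewrite ler_pdivlMr ?pdD // mulNr lerNl.
apply: le_trans (ler_norm _) _; rewrite normrN; apply: le_trans (hKQ u) _.
by rewrite -mulrA ler_wpM2l // ler_pdivlMl.
Qed.

Lemma mxpsd_unitmx_dominates T D : T^T = T -> mxpsd T -> T \in unitmx ->
  exists2 e, 0 < e & forall u, e * mxform D u u <= mxform T u u.
Proof.
move=> hT psdT unitT; have [eT eT0 heT] := mxpsd_unitmx_coercive hT psdT unitT.
have [KD KD0 hKD] := mxform_le_norm D.
exists (eT / (KD + 1)) => [|u]; first by rewrite divr_gt0 ?ltr_wpDl.
have qDs : mxform D u u <= (KD + 1) * mxform 1%:M u u.
  apply: le_trans (ler_norm _) (le_trans (hKD u) _).
  by rewrite ler_wpM2r ?lerDl ?mxform1_ge0.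
apply: le_trans (heT u); apply: le_trans (ler_wpM2l _ qDs) _.
  by rewrite divr_ge0 ?addr_ge0 // ltW.
by rewrite mulrA divfK ?lt0r_neq0 ?ltr_wpDl.
Qed.

(* The infimum m of the Rayleigh quotient makes Q - m D positive semidefinite;
   were it invertible, it would dominate a multiple of D and m would not be the infimum. *)
Lemma rayleigh_generalized_eigenvalue Q D : (0 < n)%N -> Q^T = Q -> D^T = D ->
  mxposdef D -> exists m,
    (exists2 u : 'rV_n, u != 0 & u *m Q = m *: (u *m D)) /\
    forall u, m * mxform D u u <= mxform Q u u.
Proof.
move=> n0 hQ hD pdD.
pose S : set R := fun r => exists2 u : 'rV_n, u != 0 & r = mxform Q u u / mxform D u u.
have lbS : has_lbound S.
  by have [b hb] := mxform_ratio_lbound Q hD pdD; exists b => _ [u u0 ->]; exact: hb.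
have neS : (S !=set0)%classic.
  pose u : 'rV[R]_n := delta_mx 0 (Ordinal n0).
  have u0 : u != 0 by apply/rV0Pn; exists (Ordinal n0); rewrite mxE !eqxx oner_eq0.
  by exists (mxform Q u u / mxform D u u), u.
pose m := inf S.
have hm u : m * mxform D u u <= mxform Q u u.
  have [->|u0] := eqVneq u 0; first by rewrite !mxform0l mulr0.
  by rewrite -ler_pdivlMr ?pdD //; apply: ge_inf => //; exists u.
exists m; split => //.
pose T := Q - m *: D.
have hTE u : mxform T u u = mxform Q u u - m * mxform D u u.
  by rewrite mxformMB mxformMZ.
have hT : T^T = T by rewrite /T linearB linearZ /= hQ hD.
have psdT : mxpsd T by move=> u; rewrite hTE subr_ge0.
have [unitT|] := boolP (T \in unitmx); last first.
  rewrite unitmxE unitfE negbK => /det0P [u u0 uT0]; exists u => //.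
  by apply/eqP; rewrite -subr_eq0 scalemxAr -mulmxBr -/T uT0.
have [e e0 heT] := mxpsd_unitmx_dominates D hT psdT unitT.
have [_ [u u0 ->] hlt] := inf_adherent e0 (conj neS lbS).
suff : m + e <= mxform Q u u / mxform D u u by rewrite leNgt hlt.
by rewrite ler_pdivlMr ?pdD // mulrDl -lerBrDl -hTE.
Qed.

End Rayleigh.

Section Hypergraph.
Variables (R : realType) (N : nat) (E : {set {set 'I_N}}).
Variable phi : 'I_N -> {set 'I_N} -> int.
Hypothesis hdeg1 : forall v, (0 < hdeg E v)%N.

Local Notation L := (lapmx R E phi).
Local Notation Adj := (adjmx R E phi).
Local Notation deg v := ((hdeg E v)%:R : R).

Definition degmx : 'M[R]_N := diag_mx (\row_v deg v).

Definition comb_lapmx : 'M[R]_N := degmx - Adj.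

Definition rowfun (f : 'I_N -> R) : 'rV[R]_N := \row_v f v.

Lemma deg_neq0 v : deg v != 0.
Proof. by rewrite pnatr_eq0 -lt0n hdeg1. Qed.

Lemma adj_sym v w : adj R E phi v w = adj R E phi w v.
Proof.
rewrite /adj eq_sym; case: eqP => // _.
have -> : [set e in E | [&& v \in e, w \in e & phi v e == - phi w e]] =
          [set e in E | [&& w \in e, v \in e & phi w e == - phi v e]].
  apply/setP => e; rewrite !inE; case: (e \in E) => //=; do 2!case: (_ \in e) => //=.
  by apply/idP/idP => /eqP ->; rewrite opprK.
have -> : [set e in E | [&& v \in e, w \in e & phi v e == phi w e]] =
          [set e in E | [&& w \in e, v \in e & phi w e == phi v e]].
  by apply/setP => e; rewrite !inE; do 2!case: (_ \in e) => //=; rewrite eq_sym.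
by [].
Qed.

Lemma adjmx_sym : Adj^T = Adj.
Proof. by apply/matrixP => v w; rewrite !mxE adj_sym. Qed.

Lemma adjmx_diag v : Adj v v = 0.
Proof. by rewrite mxE /adj eqxx. Qed.

Lemma degmx_sym : degmx^T = degmx.
Proof. exact: tr_diag_mx. Qed.

Lemma comb_lapmx_sym : comb_lapmx^T = comb_lapmx.
Proof. by rewrite /comb_lapmx linearB /= degmx_sym adjmx_sym. Qed.

Lemma mxform_degmx u w : mxform degmx u w = \sum_v deg v * u 0 v * w 0 v.
Proof.
rewrite mxformE; apply: eq_bigr => v _; rewrite (bigD1 v) //= big1 => [|x xv].
  by rewrite !mxE eqxx mulr1n addr0 [_ * deg v]mulrC.
by rewrite !mxE eq_sym (negPf xv) mulr0n mulr0 mul0r.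
Qed.

Lemma degmx_posdef : mxposdef degmx.
Proof.
move=> u u0; rewrite mxform_degmx lt_def; apply/andP; split; last first.
  by apply: sumr_ge0 => v _; rewrite -mulrA mulr_ge0 // -expr2 sqr_ge0.
apply: contra u0 => /eqP /psumr_eq0P h; apply/eqP/rowP => v; rewrite mxE.
have /eqP : deg v * u 0 v * u 0 v = 0.
  by apply: h => // x _; rewrite -mulrA mulr_ge0 // -expr2 sqr_ge0.
by rewrite -mulrA mulf_eq0 (negPf (deg_neq0 v)) mulf_eq0 orbb => /eqP.
Qed.

Lemma mul_degmx_lapmx : degmx *m L = comb_lapmx.
Proof.
apply/matrixP => v w; rewrite mul_diag_mx !mxE mulrBr mulrA mulfV ?deg_neq0 //.
by rewrite mul1r mulr_natr.
Qed.

Lemma trmx_lapmx_degmx : L^T *m degmx = comb_lapmx.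
Proof. by rewrite -degmx_sym -trmx_mul mul_degmx_lapmx comb_lapmx_sym. Qed.

Lemma wdot_mxform f g : wdot E f g = mxform degmx (rowfun f) (rowfun g).
Proof. by rewrite mxform_degmx; apply: eq_bigr => v _; rewrite !mxE. Qed.

Lemma rowfun_lap f : rowfun (lap_apply E phi f) = rowfun f *m L^T.
Proof.
apply/rowP => v; rewrite !mxE; apply: eq_bigr => w _.
by rewrite !mxE mulrC.
Qed.

Lemma wdot_lap f :
  wdot E (lap_apply E phi f) f = mxform comb_lapmx (rowfun f) (rowfun f).
Proof.
by rewrite wdot_mxform rowfun_lap /mxform -(mulmxA _ L^T) trmx_lapmx_degmx.
Qed.

Lemma rowfun_neq0 f : (exists v, f v != 0) <-> rowfun f != 0.
Proof. by rewrite -(rwP (rV0Pn _)); split=> -[v fv]; exists v; rewrite mxE in fv *. Qed.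

Lemma eigenfunctionP f l : is_eigenfunction E phi f l <->
  rowfun f != 0 /\ rowfun f *m L^T = l *: rowfun f.
Proof.
rewrite /is_eigenfunction rowfun_neq0 -rowfun_lap.
split=> -[f0 hf]; split=> //; first by apply/rowP => v; rewrite !mxE hf.
by move=> v; move/rowP: hf => /(_ v); rewrite !mxE.
Qed.

Lemma RQ_mxform f : RQ E phi f =
  mxform comb_lapmx (rowfun f) (rowfun f) / mxform degmx (rowfun f) (rowfun f).
Proof. by rewrite /RQ wdot_lap wdot_mxform. Qed.

Lemma lapmx_eigen_of_comb (u : 'rV_N) m :
  u *m comb_lapmx = m *: (u *m degmx) -> u *m L^T = m *: u.
Proof.
have unitD := mxposdef_unitmx degmx_posdef.
by rewrite -trmx_lapmx_degmx mulmxA scalemxAl => /(can_inj (mulmxK unitD)).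
Qed.

Lemma min_eigenvalue_rayleigh l1 : (0 < N)%N -> is_min_eigenvalue E phi l1 ->
  forall u, l1 * mxform degmx u u <= mxform comb_lapmx u u.
Proof.
move=> N0 [_ minl1] u.
have [m [[w w0 hw] hm]] := rayleigh_generalized_eigenvalue N0 comb_lapmx_sym
  degmx_sym degmx_posdef.
have eigm : eigenvalue L m.
  by rewrite -eigenvalue_trmx; apply/eigenvalueP; exists w => //; exact: lapmx_eigen_of_comb.
apply: le_trans (hm u); rewrite ler_wpM2r ?minl1 //.
exact: mxposdef_psd degmx_posdef u.
Qed.

Lemma rayleigh_eq_eigen l (u : 'rV_N) :
  (forall w, l * mxform degmx w w <= mxform comb_lapmx w w) ->
  mxform comb_lapmx u u = l * mxform degmx u u -> u *m L^T = l *: u.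
Proof.
move=> hray hu; apply: lapmx_eigen_of_comb; apply/eqP.
rewrite scalemxAr -subr_eq0 -mulmxBr.
apply/eqP/mxpsd_kernel.
- by rewrite linearB linearZ /= comb_lapmx_sym degmx_sym.
- by move=> w; rewrite mxformMB mxformMZ subr_ge0.
- by rewrite mxformMB mxformMZ hu subrr.
Qed.

Lemma min_eigenvalue_lt1 l1 : Adj != 0 ->
  (forall u, l1 * mxform degmx u u <= mxform comb_lapmx u u) -> l1 < 1.
Proof.
move=> A0 hray; have [u Au] := sym_hollow_mxform_gt0 adjmx_sym adjmx_diag A0.
have u0 : u != 0 by apply: contraTneq Au => ->; rewrite mxform0l ltxx.
have := hray u; rewrite /comb_lapmx mxformMB.
by rewrite -(ltr_pM2r (degmx_posdef u0)) mul1r; lra.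
Qed.

Section Coloring.
Variables (k : nat) (c : 'I_N -> 'I_k).
Hypothesis hc : proper_strong_coloring E c.

Definition color_part (u : 'rV[R]_N) (i : 'I_k) : 'rV[R]_N :=
  \row_v (if c v == i then u 0 v else 0).

Lemma color_part_supp u i : color_part u i != 0 -> exists2 v, c v = i & u 0 v != 0.
Proof.
move=> /rowfun_neq0 [v] /=.
by case: (eqVneq (c v) i) => [cv uv|_]; [exists v | rewrite eqxx].
Qed.

Lemma adj_same_color v w : c v = c w -> adj R E phi v w = 0.
Proof.
move=> cvw; rewrite /adj; case: eqP => // /eqP vw.
have noedge (P : {set 'I_N} -> bool) :
    [set e in E | [&& v \in e, w \in e & P e]] = finset.set0.
  apply/setP => e; rewrite !inE; apply/negP => /andP [eE /and3P [ve we _]].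
  by have := hc eE ve we vw; rewrite cvw eqxx.
by rewrite !noedge cards0 subrr.
Qed.

Lemma sum_color_part u : \sum_i color_part u i = u.
Proof.
apply/rowP => v; rewrite summxE (bigD1 (c v)) //= big1 => [|i ni].
  by rewrite !mxE eqxx addr0.
by rewrite mxE eq_sym (negPf ni).
Qed.

Lemma mxform_adjmx_color_part u i : mxform Adj (color_part u i) (color_part u i) = 0.
Proof.
rewrite mxformE big1 // => v _; rewrite big1 // => w _; rewrite !mxE.
have [cv|] := eqVneq (c v) i; last by rewrite !mul0r.
have [cw|] := eqVneq (c w) i; last by rewrite mulr0.
by rewrite adj_same_color ?cv ?cw // mulr0 mul0r.
Qed.

Lemma mxform_degmx_color_part u i j : i != j ->
  mxform degmx (color_part u i) (color_part u j) = 0.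
Proof.
move=> ij; rewrite mxform_degmx big1 // => v _; rewrite !mxE.
by have [->|] := eqVneq (c v) i; rewrite ?(negPf ij) ?mulr0 ?mul0r.
Qed.

Lemma sum_mxform_degmx_color_part u :
  \sum_i mxform degmx (color_part u i) (color_part u i) = mxform degmx u u.
Proof.
rewrite -{3 4}(sum_color_part u) mxform_suml; apply: eq_bigr => i _.
rewrite mxform_sumr (bigD1 i) //= big1 ?addr0 // => j ji.
by rewrite mxform_degmx_color_part // eq_sym.
Qed.

Lemma Sg_mxform g i j :
  Sg E phi c g i j = mxform Adj (color_part (rowfun g) i) (color_part (rowfun g) j).
Proof.
rewrite mxformE /Sg big_mkcond; apply: eq_bigr => v _ /=; rewrite !mxE.
case: eqP => _; last by rewrite big1 // => w _; rewrite !mul0r.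
rewrite big_mkcond; apply: eq_bigr => w _ /=; rewrite !mxE.
by case: eqP; rewrite ?mulr0 // [g v * _]mulrC.
Qed.

Lemma rowfun_gij g i j : i != j ->
  rowfun (gij c g i j) = color_part (rowfun g) i - color_part (rowfun g) j.
Proof.
move=> ij; apply/rowP => v; rewrite !mxE /gij.
have [->|_] := eqVneq (c v) i; first by rewrite (negPf ij) subr0.
by case: eqP => _; rewrite sub0r ?oppr0.
Qed.

Lemma mxform_degmx_color_part_sub u i j : i != j ->
  mxform degmx (color_part u i - color_part u j) (color_part u i - color_part u j) =
  mxform degmx (color_part u i) (color_part u i) +
  mxform degmx (color_part u j) (color_part u j).
Proof.
by move=> ij; rewrite mxform_sub_sub ?degmx_sym // (mxform_degmx_color_part u ij) mulr0 subr0.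
Qed.

Lemma mxform_comb_lapmx_color_part_sub u i j : i != j ->
  mxform comb_lapmx (color_part u i - color_part u j) (color_part u i - color_part u j) =
  mxform degmx (color_part u i) (color_part u i) +
  mxform degmx (color_part u j) (color_part u j) +
  2 * mxform Adj (color_part u i) (color_part u j).
Proof.
move=> ij; rewrite mxformMB mxform_degmx_color_part_sub //.
by rewrite mxform_sub_sub ?adjmx_sym // !mxform_adjmx_color_part; ring.
Qed.

Section EigenColoring.
Variables (l1 lN : R) (g : 'rV[R]_N).
Hypothesis hray : forall u, l1 * mxform degmx u u <= mxform comb_lapmx u u.
Hypothesis l1_lt1 : l1 < 1.
Hypothesis hrel : k%:R * (1 - l1) = lN - l1.
Hypothesis hg : g *m L^T = lN *: g.
Hypothesis g0 : g != 0.

Local Notation gp := (color_part g).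

Lemma comb_lapmx_color_part_sub i j :
  mxform comb_lapmx (gp i - gp j) (gp i - gp j) =
  l1 * mxform degmx (gp i - gp j) (gp i - gp j).
Proof.
pose T := comb_lapmx - l1 *: degmx.
have hT : T^T = T by rewrite /T linearB linearZ /= comb_lapmx_sym degmx_sym.
have hTE u : mxform T u u = mxform comb_lapmx u u - l1 * mxform degmx u u.
  by rewrite mxformMB mxformMZ.
have T_ge0 u : 0 <= mxform T u u by rewrite hTE subr_ge0.
have T_part i' : mxform T (gp i') (gp i') = (1 - l1) * mxform degmx (gp i') (gp i').
  by rewrite hTE /comb_lapmx mxformMB mxform_adjmx_color_part; ring.
have T_g : mxform T g g = (lN - l1) * mxform degmx g g.
  rewrite hTE /mxform -trmx_lapmx_degmx mulmxA hg -scalemxAl -scalemxAl mxE.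
  by ring.
have total : \sum_i' \sum_j' mxform T (gp i' - gp j') (gp i' - gp j') = 0.
  rewrite mxform_sum_sub // sum_color_part card_ord.
  under eq_bigr => i' _ do rewrite T_part.
  rewrite -mulr_sumr sum_mxform_degmx_color_part T_g -hrel mulnC mulrnA -mulrnBl.
  by rewrite mulr_natl mulrnAl subrr mul0rn.
have row_ge0 i' : 0 <= \sum_j' mxform T (gp i' - gp j') (gp i' - gp j').
  by apply: sumr_ge0 => j' _.
have := psumr_eq0P (fun i' _ => row_ge0 i') total (i := i) isT.
move/(psumr_eq0P (fun j' _ => T_ge0 (gp i - gp j'))) => /(_ j isT) /eqP.
by rewrite hTE subr_eq0 => /eqP.
Qed.

Lemma adj_color_parts_eq i j : i != j ->
  2 * mxform Adj (gp i) (gp j) =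
  - (1 - l1) * (mxform degmx (gp i) (gp i) + mxform degmx (gp j) (gp j)).
Proof.
move=> ij; have := comb_lapmx_color_part_sub i j.
by rewrite mxform_comb_lapmx_color_part_sub // mxform_degmx_color_part_sub //; lra.
Qed.

Lemma color_part_neq0 i : gp i != 0.
Proof.
have /existsP [j gj0] : [exists j, gp j != 0].
  apply: contraNT g0; rewrite negb_exists => /forallP gp0.
  by rewrite -(sum_color_part g) big1 // => j _; apply/eqP; rewrite -[_ == _]negbK gp0.
apply/eqP => gi0; have ij : i != j by apply: contraNneq gj0 => <-; rewrite gi0.
have := adj_color_parts_eq ij; rewrite gi0 mxform0l mulr0 mxform0l add0r.
move/eqP; rewrite eq_sym mulf_eq0 oppr_eq0 subr_eq0 (gt_eqF l1_lt1) /= => /eqP qj0.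
by have := degmx_posdef gj0; rewrite qj0 ltxx.
Qed.

Lemma adj_color_parts_lt0 i j : i != j -> mxform Adj (gp i) (gp j) < 0.
Proof.
move=> ij; have := adj_color_parts_eq ij.
have : 0 < (1 - l1) * (mxform degmx (gp i) (gp i) + mxform degmx (gp j) (gp j)).
  by rewrite mulr_gt0 ?subr_gt0 ?addr_gt0 ?degmx_posdef ?color_part_neq0.
lra.
Qed.

Lemma color_part_sub_neq0 i j : i != j -> gp i - gp j != 0.
Proof.
move=> ij; apply: contraTneq (color_part_neq0 i) => /eqP; rewrite subr_eq0 => /eqP gij.
have := mxform_degmx_color_part g ij; rewrite -gij => /eqP.
by rewrite (gt_eqF (degmx_posdef (color_part_neq0 i))).
Qed.

Lemma color_part_sub_eigen i j :
  (gp i - gp j) *m L^T = l1 *: (gp i - gp j).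
Proof. exact/rayleigh_eq_eigen/comb_lapmx_color_part_sub. Qed.

End EigenColoring.

Lemma eigenfunction_color_classes l1 lN g :
  (forall u, l1 * mxform degmx u u <= mxform comb_lapmx u u) -> l1 < 1 ->
  k%:R * (1 - l1) = lN - l1 -> is_eigenfunction E phi g lN ->
  [/\ forall i, exists v, c v = i /\ g v != 0,
      forall i j, i != j -> Sg E phi c g i j < 0 &
      forall i j, i != j ->
        RQ E phi (gij c g i j) = l1 /\ is_eigenfunction E phi (gij c g i j) l1].
Proof.
move=> hray l1_lt1 hrel /eigenfunctionP [g0 hg].
have gp_neq0 := color_part_neq0 hray l1_lt1 hrel hg g0; split.
- by move=> i; have [v cv gv] := color_part_supp (gp_neq0 i); exists v; rewrite mxE in gv.
- by move=> i j ij; rewrite Sg_mxform (adj_color_parts_lt0 hray l1_lt1 hrel hg g0 ij).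
move=> i j ij; have gij0 := color_part_sub_neq0 hray l1_lt1 hrel hg g0 ij.
split; last first.
  by apply/eigenfunctionP; rewrite rowfun_gij // (color_part_sub_eigen hray hrel hg).
rewrite RQ_mxform rowfun_gij // (comb_lapmx_color_part_sub hray hrel hg) mulfK //.
by rewrite gt_eqF ?degmx_posdef.
Qed.

End Coloring.

Lemma proper_coloring_gt1 k (c : 'I_N -> 'I_k) :
  proper_strong_coloring E c -> Adj != 0 -> (1 < k)%N.
Proof.
move=> hc /matrix0Pn [v [w]]; rewrite mxE ltnNge; apply: contraNN => k1.
apply/eqP/(adj_same_color hc)/val_inj.
by move: (ltn_ord (c v)) (ltn_ord (c w)) => /=; lia.
Qed.

Section Multiplicity.
Variables (k : nat) (c : 'I_N -> 'I_k.+1).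
Hypothesis hc : proper_strong_coloring E c.

Local Notation cp := (color_part c).

(* Its rows are the functions g_1j, 2 <= j <= chi, of the paper (classes are numbered from 0). *)
Definition color_diff_rows (u : 'rV[R]_N) : 'M[R]_(k, N) :=
  \matrix_(j < k) (cp u 0 - cp u (lift 0 j)).

Lemma row_free_color_diff_rows u :
  (forall j, cp u (lift 0 j) != 0) -> row_free (color_diff_rows u).
Proof.
move=> supp; apply/inj_row_free => x x0; apply/rowP => j; rewrite mxE.
have [v cv uv] := color_part_supp (supp j).
move/rowP: x0 => /(_ v); rewrite !mxE (bigD1 j) //= big1 => [|j' j'j].
  rewrite !mxE cv eq_sym (negPf (neq_lift _ _)) eqxx sub0r addr0 mulrN.
  by move/eqP; rewrite oppr_eq0 mulf_eq0 (negPf uv) orbF => /eqP.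
rewrite !mxE cv (inj_eq lift_inj) [j == j']eq_sym (negPf j'j) eq_sym.
by rewrite (negPf (neq_lift _ _)) subr0 mulr0.
Qed.

Lemma row_free_col_mx_color_diff_rows (u w : 'rV[R]_N) (j0 : 'I_k) :
  (forall j, cp u (lift 0 j) != 0) ->
  forall v0, c v0 = 0 -> u 0 v0 != 0 -> w 0 v0 = 0 -> cp w 0 != 0 ->
  row_free (col_mx (cp w 0 - cp w (lift 0 j0)) (color_diff_rows u)).
Proof.
move=> supp v0 cv0 uv0 wv0 w0; have [v2 cv2 wv2] := color_part_supp w0.
apply/inj_row_free => z; rewrite -[z]hsubmxK mul_row_col => hz.
set a := z 0 (lshift k 0); set s := \sum_j z 0 (rshift 1 j).
have class0 v : c v = 0 -> a * w 0 v + s * u 0 v = 0.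
  move=> cv; move/rowP: hz => /(_ v); rewrite !mxE big_ord1 !mxE cv eqxx.
  rewrite (negPf (neq_lift _ _)) subr0 (eq_bigr (fun j => z 0 (rshift 1 j) * u 0 v)).
    by rewrite -mulr_suml.
  by move=> j _; rewrite !mxE cv eqxx (negPf (neq_lift _ _)) subr0.
have s0 : s = 0.
  by have /eqP := class0 v0 cv0; rewrite wv0 mulr0 add0r mulf_eq0 (negPf uv0) orbF => /eqP.
have a0 : a = 0.
  by have /eqP := class0 v2 cv2; rewrite s0 mul0r addr0 mulf_eq0 (negPf wv2) orbF => /eqP.
have lz : lsubmx z = 0 by apply/rowP => i; rewrite ord1 !mxE.
rewrite lz mul0mx add0r in hz.
have rz : rsubmx z = 0.
  by apply: (row_free_inj (row_free_color_diff_rows supp)); rewrite hz mul0mx.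
by rewrite lz rz row_mx0.
Qed.

Lemma color_diff_rows_eigen u l :
  (forall i j, (cp u i - cp u j) *m L^T = l *: (cp u i - cp u j)) ->
  color_diff_rows u *m L^T = l *: color_diff_rows u.
Proof.
move=> hu; apply/row_matrixP => j.
by rewrite row_mul rowK hu rowE -scalemxAr -rowE rowK.
Qed.

Section EigenMultiplicity.
Variables (l1 lN : R) (g : 'rV[R]_N).
Hypothesis hray : forall u, l1 * mxform degmx u u <= mxform comb_lapmx u u.
Hypothesis l1_lt1 : l1 < 1.
Hypothesis hrel : k.+1%:R * (1 - l1) = lN - l1.
Hypothesis hg : g *m L^T = lN *: g.
Hypothesis g0 : g != 0.

Let gp_neq0 := color_part_neq0 hc hray l1_lt1 hrel hg g0.
Let gp_eigen := color_part_sub_eigen hc hray hrel hg.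

Lemma mult_min_eigenvalue_ge : (k <= mult E phi l1)%N.
Proof.
rewrite /mult -char_poly_trmx; apply: (mup_char_poly_ge_eigenrows (W := color_diff_rows g)).
  by apply: row_free_color_diff_rows => j; exact: gp_neq0.
by apply: color_diff_rows_eigen => i j; exact: gp_eigen.
Qed.

(* The extra l1-eigenfunction is h_{12} for an lN-eigenfunction h independent of g, normalized
   to vanish at a vertex of the first class where g does not. *)
Lemma mult_min_eigenvalue_gt : (0 < k)%N -> (1 < mult E phi lN)%N -> (k < mult E phi l1)%N.
Proof.
move=> k0 hmult.
have hLD : (L^T *m degmx)^T = L^T *m degmx by rewrite trmx_lapmx_degmx comb_lapmx_sym.
have [h [hh hne]] : exists h, h *m L^T = lN *: h /\ forall t, h != t *: g.
  by apply: mup_gt1_eigenvector degmx_sym hLD degmx_posdef g0 hg _; rewrite char_poly_trmx.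
have [v0 cv0 gv0] := color_part_supp (gp_neq0 0).
pose h' := h - (h 0 v0 / g 0 v0) *: g.
have hh' : h' *m L^T = lN *: h'.
  by rewrite mulmxBl -scalemxAl hh hg scalerBr !scalerA mulrC.
have h'0 : h' != 0 by rewrite subr_eq0 hne.
have h'v0 : h' 0 v0 = 0 by rewrite !mxE divfK ?subrr.
have freeW := row_free_col_mx_color_diff_rows (Ordinal k0) (fun j => gp_neq0 (lift 0 j))
  cv0 gv0 h'v0 (color_part_neq0 hc hray l1_lt1 hrel hh' h'0 0).
rewrite /mult -char_poly_trmx; apply: (mup_char_poly_ge_eigenrows freeW).
rewrite mul_col_mx (color_part_sub_eigen hc hray hrel hh') scale_col_mx.
by congr col_mx; apply: color_diff_rows_eigen => i j; exact: gp_eigen.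
Qed.

End EigenMultiplicity.

End Multiplicity.

End Hypergraph.

Lemma solve_relation (F : fieldType) (x a b : F) :
  x * (1 - a) = b - a -> x != 1 -> a = (x - b) / (x - 1).
Proof.
move=> h x1; have x10 : x - 1 != 0 by rewrite subr_eq0.
apply: (mulIf x10); rewrite divfK //.
have -> : b = x * (1 - a) + a by rewrite h subrK.
by ring.
Qed.

Theorem mainTheorem2 (R : realType) (N : nat) (E : {set {set 'I_N}})
  (phi : 'I_N -> {set 'I_N} -> int)
  (hG : is_oriented_hypergraph E phi)
  (hdeg1 : forall v, (0 < hdeg E v)%N)
  (hA : adjmx R E phi != 0)
  (chi : nat) (hchi : is_strong_chromatic_number E chi)
  (l1 lN : R) (hl1 : is_min_eigenvalue E phi l1) (hlN : is_max_eigenvalue E phi lN)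
  (hrel : chi%:R = (lN - l1) / (1 - l1)) :
  (forall (g : 'I_N -> R), is_eigenfunction E phi g lN ->
   forall (c : 'I_N -> 'I_chi), proper_strong_coloring E c ->
     (forall i : 'I_chi, exists v, c v = i /\ g v != 0) /\
     (forall i j : 'I_chi, (i < j)%N -> Sg E phi c g i j < 0) /\
     (forall i j : 'I_chi, (i < j)%N ->
        RQ E phi (gij c g i j) = l1 /\ l1 = (chi%:R - lN) / (chi%:R - 1) /\
        is_eigenfunction E phi (gij c g i j) l1)) /\
  l1 = (chi%:R - lN) / (chi%:R - 1) /\
  (chi.-1 <= mult E phi l1)%N /\
  ((1 < mult E phi lN)%N -> (chi.-1 < mult E phi l1)%N).
Proof.
have [v _] := matrix0Pn _ hA.
case: chi hchi hrel => [|k] [[c0 hc0] _] hrel; first by case: (c0 v).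
have k0 : (0 < k)%N := proper_coloring_gt1 hc0 hA.
have hray := min_eigenvalue_rayleigh hdeg1 (leq_ltn_trans (leq0n v) (ltn_ord v)) hl1.
have l1_lt1 := min_eigenvalue_lt1 hdeg1 hA hray.
have hrel' : k.+1%:R * (1 - l1) = lN - l1.
  by rewrite hrel divfK // subr_eq0 gt_eqF.
have l1E : l1 = (k.+1%:R - lN) / (k.+1%:R - 1).
  by apply: (solve_relation hrel'); rewrite pnatr_eq1 -lt0n.
have [g hg g0] : exists2 g : 'rV_N, g *m (lapmx R E phi)^T = lN *: g & g != 0.
  by apply/eigenvalueP; rewrite eigenvalue_trmx; exact: hlN.1.
split=> [g' hg' c hc|]; last split=> //.
  have [supp hS hRQ] := eigenfunction_color_classes hdeg1 hc hray l1_lt1 hrel' hg'.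
  have ltn_neq (i j : 'I_k.+1) : (i < j)%N -> i != j by move/ltn_eqF/negbT.
  split=> //; split=> i j /ltn_neq ij; first exact: hS.
  by have [? ?] := hRQ i j ij.
rewrite succnK; split; first exact: (mult_min_eigenvalue_ge hdeg1 hc0 hray l1_lt1 hrel' hg g0).
exact: (mult_min_eigenvalue_gt hdeg1 hc0 hray l1_lt1 hrel' hg g0 k0).
Qed.
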